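(* Let $q$ be a self-join-free Boolean conjunctive query, let $q_0\subseteq q$, and let $\mathbf{db}$ be a database. If $\mathbf{o}_1$ and $\mathbf{o}_2$ are garbage sets for $q_0$ in $\mathbf{db}$, then $\mathbf{o}_1\cup\mathbf{o}_2$ is a garbage set for $q_0$ in $\mathbf{db}$.
   Context: Every relation name has a signature $[n,k]$ ($1\le k\le n$; primary-key positions $1,\dots,k$) and a mode in $\{\mathsf{c},\mathsf{i}\}$. Facts are variable-free atoms; facts are key-equal if same relation name and same primary-key values. A database is a finite set of facts with no two distinct key-equal facts of mode $\mathsf{c}$, all of whose relation names occur in $q$. The block of a fact $A$ in $\mathbf{db}$ is the set of facts of $\mathbf{db}$ key-equal to $A$. A repair of a set of facts is a maximal subset without two distinct key-equal facts. A self-join-free Boolean conjunctive query is a finite set of atoms with distinct relation names; for a fact $A$, $\mathrm{atom}(A)$ is the atom of $q$ with the same relation name; valuations are extended as the identity on constants. A subset $\mathbf{o}\subseteq\mathbf{db}$ is a garbage set for $q_0$ in $\mathbf{db}$ if (1) for every $A\in\mathbf{o}$, $\mathrm{atom}(A)\in q_0$ and the block of $A$ in $\mathbf{db}$ is included in $\mathbf{o}$; and (2) there is a repair $\mathbf{r}$ of $\mathbf{o}$ such that for every valuation $\theta$ of the variables of $q$, if $\theta(q)\subseteq(\mathbf{db}\setminus\mathbf{o})\cup\mathbf{r}$ then $\theta(q_0)\cap\mathbf{r}=\emptyset$. *)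

From Stdlib Require Import List Arith.
Import ListNotations.
Set Implicit Arguments.

Inductive Mode := ModeC | ModeI.

Record Schema := {
  Rel : Type;
  arity : Rel -> nat;
  keylen : Rel -> nat;        (* k : primary-key positions 1..k *)
  mode : Rel -> Mode;
  keylen_pos : forall R, 1 <= keylen R;
  keylen_le : forall R, keylen R <= arity R
}.

Section Defs.
Variable S : Schema.
Variables Var Const : Type.

Inductive Term := TVar (x : Var) | TConst (c : Const).

Record Atom := { arel : Rel S; aargs : list Term }.
Definition wf_atom (a : Atom) : Prop := length (aargs a) = arity S (arel a).

Record Fact := { frel : Rel S; fargs : list Const }.
Definition wf_fact (A : Fact) : Prop := length (fargs A) = arity S (frel A).

Definition key_equal (A B : Fact) : Prop :=
  frel A = frel B /\
  firstn (keylen S (frel A)) (fargs A) = firstn (keylen S (frel B)) (fargs B).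

Definition sjf_query (q : list Atom) : Prop :=
  NoDup (map arel q) /\ Forall wf_atom q.

Definition subquery (q0 q : list Atom) : Prop := forall a, In a q0 -> In a q.

Definition fset := Fact -> Prop.
Definition fsubset (X Y : fset) : Prop := forall A, X A -> Y A.
Definition funion (X Y : fset) : fset := fun A => X A \/ Y A.

Definition database (q : list Atom) (db : fset) : Prop :=
  (exists l : list Fact, forall A, db A <-> In A l) /\
  (forall A, db A -> wf_fact A) /\
  (forall A B, db A -> db B -> mode S (frel A) = ModeC -> key_equal A B -> A = B) /\
  (forall A, db A -> exists a, In a q /\ arel a = frel A).

Definition consistent (X : fset) : Prop :=
  forall A B, X A -> X B -> key_equal A B -> A = B.

Definition repair (o r : fset) : Prop :=
  fsubset r o /\ consistent r /\
  (forall r', fsubset r r' -> fsubset r' o -> consistent r' -> fsubset r' r).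

Definition term_val (th : Var -> Const) (t : Term) : Const :=
  match t with TVar x => th x | TConst c => c end.
Definition atom_val (th : Var -> Const) (a : Atom) : Fact :=
  {| frel := arel a; fargs := map (term_val th) (aargs a) |}.

Definition val_in (th : Var -> Const) (q : list Atom) (X : fset) : Prop :=
  forall a, In a q -> X (atom_val th a).

(* atom(A) ∈ q0, where atom(A) is the atom of q with the relation name of A *)
Definition atom_in (q q0 : list Atom) (A : Fact) : Prop :=
  forall a, In a q -> arel a = frel A -> In a q0.

Definition garbage_set (q q0 : list Atom) (db o : fset) : Prop :=
  fsubset o db /\
  (forall A, o A ->
     atom_in q q0 A /\ (forall B, db B -> key_equal A B -> o B)) /\
  (exists r, repair o r /\
     forall th : Var -> Const,
       val_in th q (funion (fun A => db A /\ ~ o A) r) ->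
       forall a, In a q0 -> ~ r (atom_val th a)).

End Defs.

(* Let r1, r2 be the repairs witnessing that o1, o2 are garbage sets.  Since
   o1 is a union of blocks of db, no fact of o2 outside o1 is key-equal to a
   fact of o1, so r := r1 ∪ (r2 \ o1) is a repair of o1 ∪ o2.  If a valuation
   embeds q into (db \ (o1 ∪ o2)) ∪ r, it also embeds q into (db \ o1) ∪ r1,
   so it sends no atom of q0 into r1; as every fact of r1 ⊆ o1 has its atom
   in q0, it then sends no atom of q at all into r1.  Hence it embeds q into
   (db \ o2) ∪ r2 as well, and sends no atom of q0 into r2 either. *)
From Stdlib Require Import List Classical.

Section Repairs.
Variables (S : Schema) (Const : Type).
Implicit Types (A B C : Fact S Const) (X Y r : fset S Const).

Definition fdiff X Y : fset S Const := fun A => X A /\ ~ Y A.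

Lemma key_equal_sym A B : key_equal A B -> key_equal B A.
Proof. intros [Hrel Hkey]; split; auto. Qed.

Lemma repair_ext X Y r : (forall A, X A <-> Y A) -> repair X r -> repair Y r.
Proof.
  intros HXY [Hsub [Hcons Hmax]]; split; [|split]; auto.
  - intros A HA; apply HXY; auto.
  - intros r' Hrr' Hr'Y; apply Hmax; auto.
    intros A HA; apply HXY; auto.
Qed.

Lemma repair_maximal_in X r r' C :
  repair X r -> fsubset r r' -> consistent r' -> r' C -> X C -> r C.
Proof.
  intros [Hsub [_ Hmax]] Hrr' Hcons HC HXC.
  apply (Hmax (fun A => r' A /\ X A)); auto.
  - intros A HA; split; auto.
  - intros A [_ HA]; auto.
  - intros A B [HA _] [HB _]; auto.
Qed.

Lemma repair_union X Y rX rY :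
  repair X rX -> repair Y rY ->
  (forall A B, X A -> Y B -> ~ key_equal A B) ->
  repair (funion X Y) (funion rX rY).
Proof.
  intros HrX HrY Hsep.
  pose proof HrX as [HsubX [HconsX _]].
  pose proof HrY as [HsubY [HconsY _]].
  split; [|split].
  - intros A [HA|HA]; [left|right]; auto.
  - intros A B [HA|HA] [HB|HB] HAB; auto.
    + exfalso; apply (Hsep A B); auto.
    + exfalso; apply (Hsep B A); auto using key_equal_sym.
  - intros r' Hrr' Hr' Hcons C HC.
    destruct (Hr' C HC) as [HXC|HYC].
    + left; apply (repair_maximal_in _ _ r' C HrX); auto.
      intros A HA; apply Hrr'; left; auto.
    + right; apply (repair_maximal_in _ _ r' C HrY); auto.
      intros A HA; apply Hrr'; right; auto.
Qed.

Lemma repair_diff X Y r :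
  repair Y r -> (forall A B, X A -> Y B -> key_equal A B -> X B) ->
  repair (fdiff Y X) (fdiff r X).
Proof.
  intros Hr Hclosed.
  pose proof Hr as [Hsub [Hcons _]].
  split; [|split].
  - intros A [HA HXA]; split; auto.
  - intros A B [HA _] [HB _]; auto.
  - intros r' Hrr' Hr' Hcons' C HC.
    pose (r'' := fun A => (r A /\ X A) \/ r' A).
    assert (Hcons'' : consistent r'').
    { intros A B [[HA HXA]|HA] [[HB HXB]|HB] HAB; auto.
      - destruct (Hr' B HB) as [HYB HXB].
        exfalso; apply HXB, (Hclosed A B); auto.
      - destruct (Hr' A HA) as [HYA HXA].
        exfalso; apply HXA, (Hclosed B A); auto using key_equal_sym. }
    destruct (Hr' C HC) as [HYC HXC]; split; auto.
    apply (repair_maximal_in _ _ r'' C Hr); auto.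
    + intros A HA; destruct (classic (X A)) as [HXA|HXA].
      * left; split; auto.
      * right; apply Hrr'; split; auto.
    + right; auto.
Qed.

Lemma repair_union_diff o1 o2 r1 r2 :
  repair o1 r1 -> repair o2 r2 ->
  (forall A B, o1 A -> o2 B -> key_equal A B -> o1 B) ->
  repair (funion o1 o2) (funion r1 (fdiff r2 o1)).
Proof.
  intros Hr1 Hr2 Hclosed.
  apply repair_ext with (funion o1 (fdiff o2 o1)).
  - intros A; split.
    + intros [HA|[HA _]]; [left|right]; auto.
    + intros [HA|HA]; [left; auto|].
      destruct (classic (o1 A)); [left|right; split]; auto.
  - apply repair_union; auto using repair_diff.
    intros A B HA [HB HnB] HAB; apply HnB, (Hclosed A B); auto.
Qed.

End Repairs.

Arguments fdiff {S Const} X Y.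

Section GarbageSets.
Variables (S : Schema) (Var Const : Type).
Variables (q q0 : list (Atom S Var Const)) (db : fset S Const).
Implicit Types (A B : Fact S Const) (o r : fset S Const).

Definition blocks_of_q0 o : Prop :=
  forall A, o A -> atom_in q q0 A /\ (forall B, db B -> key_equal A B -> o B).

Definition repair_avoids_q0 o r : Prop :=
  forall th : Var -> Const,
    val_in th q (funion (fdiff db o) r) ->
    forall a, In a q0 -> ~ r (atom_val th a).

Lemma blocks_of_q0_union o1 o2 :
  blocks_of_q0 o1 -> blocks_of_q0 o2 -> blocks_of_q0 (funion o1 o2).
Proof.
  intros H1 H2 A [HA|HA].
  - destruct (H1 A HA) as [Hq0 Hblk]; split; auto.
    intros B HB HAB; left; auto.
  - destruct (H2 A HA) as [Hq0 Hblk]; split; auto.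
    intros B HB HAB; right; auto.
Qed.

Lemma repair_avoids_q0_union_diff o1 o2 r1 r2 :
  fsubset r1 o1 -> blocks_of_q0 o1 -> fsubset r2 db ->
  repair_avoids_q0 o1 r1 -> repair_avoids_q0 o2 r2 ->
  repair_avoids_q0 (funion o1 o2) (funion r1 (fdiff r2 o1)).
Proof.
  intros Hr1o1 Hblk1 Hr2db Hav1 Hav2 th Hv.
  assert (Hq0r1 : forall a, In a q0 -> ~ r1 (atom_val th a)).
  { apply Hav1; intros a Ha.
    destruct (Hv a Ha) as [[Hdb Ho]|[Hr1|[Hr2 Ho1]]].
    - left; split; auto. intro; apply Ho; left; auto.
    - right; auto.
    - left; split; auto. }
  assert (Hqr1 : forall a, In a q -> ~ r1 (atom_val th a)).
  { intros a Ha Hr1; apply (Hq0r1 a); auto.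
    apply (proj1 (Hblk1 _ (Hr1o1 _ Hr1))); auto. }
  assert (Hq0r2 : forall a, In a q0 -> ~ r2 (atom_val th a)).
  { apply Hav2; intros a Ha.
    destruct (Hv a Ha) as [[Hdb Ho]|[Hr1|[Hr2 _]]].
    - left; split; auto. intro; apply Ho; right; auto.
    - exfalso; apply (Hqr1 a); auto.
    - right; auto. }
  intros a Ha [Hr1|[Hr2 _]]; [apply (Hq0r1 a)|apply (Hq0r2 a)]; auto.
Qed.

End GarbageSets.

Theorem lemma15 (S : Schema) (Var Const : Type)
  (q q0 : list (Atom S Var Const)) (db o1 o2 : fset S Const) :
  sjf_query q -> subquery q0 q -> database q db ->
  garbage_set q q0 db o1 -> garbage_set q q0 db o2 ->
  garbage_set q q0 db (funion o1 o2).
Proof.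
  intros _ _ _ [Hdb1 [Hblk1 [r1 [Hr1 Hav1]]]] [Hdb2 [Hblk2 [r2 [Hr2 Hav2]]]].
  split; [|split].
  - intros A [HA|HA]; auto.
  - apply blocks_of_q0_union; auto.
  - exists (funion r1 (fdiff r2 o1)); split.
    + apply repair_union_diff; auto.
      intros A B HA HB; apply (proj2 (Hblk1 A HA)); auto.
    + apply repair_avoids_q0_union_diff; auto.
      * apply (proj1 Hr1).
      * intros A HA; apply Hdb2, (proj1 Hr2); auto.
Qed.
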